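(* If expressions $e_1$ and $e_2$ are compatible and $[\![C_1]\!]$ and $[\![C_2]\!]$ are total functions, then $[\![(\mathsf{assume}\ e_1;C_1)+(\mathsf{assume}\ e_2;C_2)]\!]$ is a total function.
   Context: $\mathcal A=\langle U,+,\cdot,\mathbf 0,\mathbf 1\rangle$ is a partial semiring ($+$ commutative, associative, possibly partial, unit $\mathbf 0$; $\cdot$ total, associative, unit $\mathbf 1$; two-sided distributivity; $\mathbf 0$ annihilates), naturally ordered ($u\le v$ iff $\exists w.\,u+w=v$ is a partial order), Scott continuous, with a top element. Infinite sums are suprema of finite partial sums. $\mathcal W(\Sigma)$: maps $m:\Sigma\to U$ with countable support and defined mass, with pointwise operations. $\eta(\sigma)(\tau)=\mathbf 1$ if $\sigma=\tau$ else $\mathbf 0$; $f^\dagger(m)(\tau)=\sum_{\sigma\in\mathrm{supp}(m)}m(\sigma)\cdot f(\sigma)(\tau)$. Program semantics $[\![C]\!]:\Sigma\to\mathcal W(\Sigma)$ (possibly partial): $[\![C_1;C_2]\!](\sigma)=[\![C_2]\!]^\dagger([\![C_1]\!](\sigma))$, $[\![C_1+C_2]\!](\sigma)=[\![C_1]\!](\sigma)+[\![C_2]\!](\sigma)$, $[\![\mathsf{assume}\ e]\!](\sigma)=[\![e]\!](\sigma)\cdot\eta(\sigma)$. An expression $e$ is a test $b$ (Boolean combination of $\mathsf{true},\mathsf{false}$ and primitive tests $t\subseteq\Sigma$, with $[\![b]\!](\sigma)\in\{\mathbf 0,\mathbf 1\}$, $[\![t]\!](\sigma)=\mathbf 1$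 iff $\sigma\in t$) or a weight $u\in U$ with $[\![u]\!](\sigma)=u$. Expressions $e_1,e_2$ are compatible if $[\![e_1]\!](\sigma)+[\![e_2]\!](\sigma)$ is defined for every $\sigma\in\Sigma$. *)

From Stdlib Require Import List Classical ClassicalEpsilon.
Import ListNotations.
Set Implicit Arguments.

Definition is_ub {U : Type} (le : U -> U -> Prop) (D : U -> Prop) (u : U) :=
  forall d, D d -> le d u.
Definition is_lub {U : Type} (le : U -> U -> Prop) (D : U -> Prop) (u : U) :=
  is_ub le D u /\ forall w, is_ub le D w -> le u w.
Definition directed {U : Type} (le : U -> U -> Prop) (D : U -> Prop) :=
  (exists d, D d) /\
  forall a b, D a -> D b -> exists c, D c /\ le a c /\ le b c.

Record PSR := {
  U :> Type;
  add : U -> U -> option U;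
  mul : U -> U -> U;
  zero : U;
  one : U;
  add_comm : forall a b, add a b = add b a;
  (* associativity of the partial +, as Kleene equality *)
  add_assoc : forall a b c,
      match add a b with Some ab => add ab c | None => None end =
      match add b c with Some bc => add a bc | None => None end;
  add_zero : forall a, add a zero = Some a;
  mul_assoc : forall a b c, mul a (mul b c) = mul (mul a b) c;
  mul_one_l : forall a, mul one a = a;
  mul_one_r : forall a, mul a one = a;
  mul_add_l : forall u v w s, add v w = Some s -> add (mul u v) (mul u w) = Some (mul u s);
  mul_add_r : forall u v w s, add v w = Some s -> add (mul v u) (mul w u) = Some (mul s u);
  mul_zero_l : forall a, mul zero a = zero;
  mul_zero_r : forall a, mul a zero = zero;
  (* natural order u <= v iff exists w, u + w = v; it is a partial order
     (reflexivity and transitivity hold automatically; antisymmetry is assumed) *)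
  nat_antisym : forall a b,
      (exists w, add a w = Some b) -> (exists w, add b w = Some a) -> a = b;
  dcpo : forall D, directed (fun a b => exists w, add a w = Some b) D ->
      exists s, is_lub (fun a b => exists w, add a w = Some b) D s;
  mul_cont_l : forall D s u, directed (fun a b => exists w, add a w = Some b) D ->
      is_lub (fun a b => exists w, add a w = Some b) D s ->
      is_lub (fun a b => exists w, add a w = Some b) (fun v => exists d, D d /\ v = mul u d) (mul u s);
  mul_cont_r : forall D s u, directed (fun a b => exists w, add a w = Some b) D ->
      is_lub (fun a b => exists w, add a w = Some b) D s ->
      is_lub (fun a b => exists w, add a w = Some b) (fun v => exists d, D d /\ v = mul d u) (mul s u);
  add_cont : forall D s u, directed (fun a b => exists w, add a w = Some b) D ->
      is_lub (fun a b => exists w, add a w = Some b) D s ->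
      (forall d, D d -> add u d <> None) ->
      exists t, add u s = Some t /\
        is_lub (fun a b => exists w, add a w = Some b) (fun v => exists d, D d /\ add u d = Some v) t;
  has_top : exists t, forall u, exists w, add u w = Some t
}.

Section Sem.
Variable A : PSR.
Variable Sigma : Type.

Definition le (a b : A) : Prop := exists w, add A a w = Some b.

Definition fin_sum (l : list A) : option A :=
  fold_right (fun a acc => match acc with Some s => add A a s | None => None end)
             (Some (zero A)) l.

Definition partial_sum {I : Type} (S : I -> Prop) (g : I -> A) (v : A) : Prop :=
  exists l : list I, NoDup l /\ (forall x, In x l -> S x) /\ fin_sum (map g l) = Some v.

Definition is_sum {I : Type} (S : I -> Prop) (g : I -> A) (u : A) : Prop :=
  (forall l : list I, NoDup l -> (forall x, In x l -> S x) -> fin_sum (map g l) <> None) /\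
  is_lub le (partial_sum S g) u.

Definition countable {I : Type} (S : I -> Prop) : Prop :=
  exists f : I -> nat, forall x y, S x -> S y -> f x = f y -> x = y.

Definition supp (m : Sigma -> A) (s : Sigma) : Prop := m s <> zero A.

(* m belongs to W(Sigma): countable support and defined mass *)
Definition is_weighting (m : Sigma -> A) : Prop :=
  countable (supp m) /\ exists u, is_sum (supp m) m u.

Definition guard {X : Type} (P : Prop) (x : X) : option X :=
  if excluded_middle_informative P then Some x else None.

Definition sum_val (S : Sigma -> Prop) (g : Sigma -> A) : option A :=
  match excluded_middle_informative (exists u, is_sum S g u) with
  | left H => Some (proj1_sig (constructive_indefinite_description _ H))
  | right _ => None
  end.

(* a (possibly partial) program denotation Sigma -> W(Sigma) *)
Definition den := Sigma -> option (Sigma -> A).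

Definition wf_den (d : den) : Prop :=
  forall s m, d s = Some m -> is_weighting m.

Definition total (d : den) : Prop := forall s, d s <> None.

Definition eta (s : Sigma) : Sigma -> A :=
  fun t => if excluded_middle_informative (s = t) then one A else zero A.

Definition wplus (m1 m2 : Sigma -> A) : option (Sigma -> A) :=
  let r := fun t => match add A (m1 t) (m2 t) with Some v => v | None => zero A end in
  guard ((forall t, add A (m1 t) (m2 t) <> None) /\ is_weighting r) r.

(* Kleisli extension f^dagger(m)(t) = sum_{s in supp m} m(s) . f(s)(t) *)
Definition bind (f : den) (m : Sigma -> A) : option (Sigma -> A) :=
  let g := fun s t => match f s with Some m' => m' t | None => zero A end in
  let r := fun t => match sum_val (supp m) (fun s => mul A (m s) (g s t)) with
                    | Some v => v | None => zero A end in
  guard ((forall s, supp m s -> f s <> None) /\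
         (forall t, exists u, is_sum (supp m) (fun s => mul A (m s) (g s t)) u) /\
         is_weighting r) r.

Inductive test : Type :=
  | TTrue | TFalse
  | TPrim (t : Sigma -> Prop)
  | TNot (b : test)
  | TAnd (b1 b2 : test)
  | TOr (b1 b2 : test).

Fixpoint holds (b : test) (s : Sigma) : Prop :=
  match b with
  | TTrue => True
  | TFalse => False
  | TPrim t => t s
  | TNot b => ~ holds b s
  | TAnd b1 b2 => holds b1 s /\ holds b2 s
  | TOr b1 b2 => holds b1 s \/ holds b2 s
  end.

Inductive expr : Type :=
  | ETest (b : test)
  | EWeight (u : A).

Definition eval (e : expr) (s : Sigma) : A :=
  match e with
  | ETest b => if excluded_middle_informative (holds b s) then one A else zero A
  | EWeight u => u
  end.

Definition compatible (e1 e2 : expr) : Prop :=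
  forall s, add A (eval e1 s) (eval e2 s) <> None.

Definition sem_assume (e : expr) : den :=
  fun s => let r := fun t => mul A (eval e s) (eta s t) in guard (is_weighting r) r.

Definition sem_seq (d1 d2 : den) : den :=
  fun s => match d1 s with Some m => bind d2 m | None => None end.

Definition sem_plus (d1 d2 : den) : den :=
  fun s => match d1 s, d2 s with Some m1, Some m2 => wplus m1 m2 | _, _ => None end.

End Sem.

From Stdlib Require Import List Permutation Classical ClassicalEpsilon FunctionalExtensionality Lia.
Import ListNotations.
Set Implicit Arguments.
Unset Strict Implicit.

(** Sequencing after [assume e] only rescales: if [C1 s = a] and [C2 s = b], the two
    branches denote [c1 a] and [c2 b] with [c1 = [e1](s)] and [c2 = [e2](s)].
    Compatibility makes [c1 + c2] defined, and with the top element [T] we get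
    [c1 x <= c1 T] and [c2 y <= c2 T], where [c1 T + c2 T = (c1 + c2) T] is defined;
    since a sum below a defined sum is defined, every [c1 x + c2 y] is defined.
    So the pointwise sum of [c1 a] and [c2 b] exists, its support lies in the union
    of two countable supports, and by Scott continuity of [+] its mass is the sum of
    the two masses. *)

Definition asbool (P : Prop) : bool := if excluded_middle_informative P then true else false.

Lemma asboolE P : asbool P = true <-> P.
Proof. unfold asbool; destruct excluded_middle_informative; split; auto; discriminate. Qed.

Lemma guard_Some X (P : Prop) (x : X) : P -> guard P x = Some x.
Proof. intros H; unfold guard; destruct excluded_middle_informative; tauto. Qed.

Lemma countable_subset I (S S' : I -> Prop) :
  (forall x, S' x -> S x) -> countable S -> countable S'.
Proof. intros H [f Hf]. exists f. auto. Qed.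

Lemma countable_union I (S S1 S2 : I -> Prop) :
  countable S1 -> countable S2 -> (forall x, S x -> S1 x \/ S2 x) -> countable S.
Proof.
  intros [f1 H1] [f2 H2] H.
  exists (fun x => if asbool (S1 x) then 2 * f1 x else 2 * f2 x + 1).
  intros x y Hx Hy E.
  destruct (asbool (S1 x)) eqn:Ex, (asbool (S1 y)) eqn:Ey; try lia.
  - apply H1; [apply asboolE; auto | apply asboolE; auto | lia].
  - apply H2; [| | lia].
    + destruct (H x Hx) as [h|h]; [apply (proj2 (asboolE _)) in h; congruence | auto].
    + destruct (H y Hy) as [h|h]; [apply (proj2 (asboolE _)) in h; congruence | auto].
Qed.

Lemma NoDup_incl_Permutation I (l' l : list I) :
  NoDup l' -> incl l' l -> NoDup l -> exists r, Permutation l (l' ++ r).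
Proof.
  revert l; induction l' as [|x l' IH]; intros l Hn Hi Hl.
  - exists l; auto.
  - destruct (in_split x l (Hi x (or_introl eq_refl))) as (l1 & l2 & ->).
    inversion Hn; subst.
    destruct (IH (l1 ++ l2)) as [r Hr].
    + assumption.
    + intros y Hy. destruct (in_app_or _ _ _ (Hi y (or_intror Hy))) as [h|[h|h]];
        apply in_or_app; subst; tauto.
    + exact (NoDup_remove_1 _ _ _ Hl).
    + exists r. simpl. apply (Permutation_trans (Permutation_sym (Permutation_middle _ _ _))).
      apply perm_skip; auto.
Qed.

Lemma NoDup_union I (l1 l2 : list I) : NoDup l1 -> NoDup l2 ->
  exists l, NoDup l /\ incl l1 l /\ incl l2 l /\ forall x, In x l -> In x l1 \/ In x l2.
Proof.
  intros H1 H2. exists (l1 ++ filter (fun x => asbool (~ In x l1)) l2).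
  repeat split.
  - apply NoDup_app; [auto | apply NoDup_filter; auto |].
    intros x Hx Hf. apply filter_In in Hf. destruct Hf as [_ Hf]. rewrite asboolE in Hf. auto.
  - intros x Hx; apply in_or_app; auto.
  - intros x Hx. apply in_or_app. destruct (classic (In x l1)); auto.
    right. apply filter_In. rewrite asboolE. auto.
  - intros x Hx. destruct (in_app_or _ _ _ Hx) as [H|H]; auto.
    apply filter_In in H. tauto.
Qed.

Section PartialSemiring.
Variable A : PSR.
Local Notation add := (add A).
Local Notation mul := (mul A).
Local Notation zero := (zero A).
Local Notation fs := (fin_sum A).
Local Notation le := (le A).

Lemma add_zero_l a : add zero a = Some a.
Proof. rewrite add_comm; apply add_zero. Qed.

Lemma le_refl a : le a a.
Proof. exists zero; apply add_zero. Qed.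

Lemma zero_le a : le zero a.
Proof. exists a; apply add_zero_l. Qed.

Lemma le_trans a b c : le a b -> le b c -> le a c.
Proof.
  intros [w Hw] [v Hv]. pose proof (add_assoc A a w v) as H.
  rewrite Hw, Hv in H. destruct (add w v) as [wv|]; [|discriminate].
  exists wv; auto.
Qed.

Lemma lub_unique (D : A -> Prop) u v : is_lub le D u -> is_lub le D v -> u = v.
Proof. intros [Hu Lu] [Hv Lv]. apply nat_antisym; [apply Lu | apply Lv]; assumption. Qed.

Lemma fin_sum_cons x l : fs (x :: l) = match fs l with Some s => add x s | None => None end.
Proof. reflexivity. Qed.

Lemma fin_sum_single a : fs [a] = Some a.
Proof. apply add_zero. Qed.

Lemma fin_sum_pair a b : fs [a; b] = add a b.
Proof. rewrite fin_sum_cons, fin_sum_single. reflexivity. Qed.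

Lemma fin_sum_app l1 l2 :
  fs (l1 ++ l2) = match fs l1, fs l2 with Some a, Some b => add a b | _, _ => None end.
Proof.
  induction l1 as [|x l1 IH]; simpl app.
  - destruct (fs l2); [apply eq_sym, add_zero_l | reflexivity].
  - rewrite !fin_sum_cons, IH.
    destruct (fs l1) as [a|], (fs l2) as [b|]; auto.
    + pose proof (add_assoc A x a b) as H.
      destruct (add a b), (add x a); auto.
    + destruct (add x a); auto.
Qed.

Lemma fin_sum_app_Some l1 l2 c : fs (l1 ++ l2) = Some c ->
  exists a b, fs l1 = Some a /\ fs l2 = Some b /\ add a b = Some c.
Proof.
  rewrite fin_sum_app. destruct (fs l1) as [a|], (fs l2) as [b|]; try discriminate.
  eauto.
Qed.

Lemma fin_sum_Permutation l l' : Permutation l l' -> fs l = fs l'.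
Proof.
  induction 1 as [| x l l' _ IH | x y l | l l' l'' _ IH _ IH']; try congruence.
  - rewrite !fin_sum_cons, IH; auto.
  - rewrite !fin_sum_cons. destruct (fs l) as [s|]; auto.
    pose proof (add_assoc A y x s) as H1. pose proof (add_assoc A x y s) as H2.
    rewrite (add_comm A y x) in H1. rewrite H1 in H2. auto.
Qed.

Lemma add_interchange a b c d x y z :
  add a b = Some x -> add c d = Some y -> add x y = Some z ->
  exists u v, add a c = Some u /\ add b d = Some v /\ add u v = Some z.
Proof.
  intros Hx Hy Hz.
  assert (E : fs ([a; b] ++ [c; d]) = Some z) by (rewrite fin_sum_app, !fin_sum_pair, Hx, Hy; auto).
  rewrite (fin_sum_Permutation (l' := [a; c] ++ [b; d])) in E
    by (simpl; apply perm_skip, perm_swap).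
  destruct (fin_sum_app_Some E) as (u & v & Hu & Hv & Huv).
  rewrite fin_sum_pair in Hu, Hv. eauto.
Qed.

Lemma add_defined_le x y x' y' c : le x x' -> le y y' -> add x' y' = Some c ->
  exists s, add x y = Some s /\ le s c.
Proof.
  intros [w Hw] [v Hv] H.
  destruct (add_interchange Hw Hv H) as (u & u' & Hu & Hu' & Huu).
  exists u; split; auto. exists u'; auto.
Qed.

Lemma mul_le_l c x y : le x y -> le (mul c x) (mul c y).
Proof. intros [w Hw]. exists (mul c w). apply mul_add_l; auto. Qed.

Lemma fin_sum_mul_l c l p : fs l = Some p -> fs (map (mul c) l) = Some (mul c p).
Proof.
  revert p; induction l as [|x l IH]; intros p H.
  - injection H as <-. simpl. rewrite mul_zero_r. reflexivity.
  - simpl map. rewrite fin_sum_cons in *.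
    destruct (fs l) as [q|]; [|discriminate].
    rewrite (IH q eq_refl). apply mul_add_l; auto.
Qed.

Lemma add_lub_least D1 D2 U1 U2 U w :
  directed le D1 -> is_lub le D1 U1 -> directed le D2 -> is_lub le D2 U2 ->
  add U1 U2 = Some U ->
  (forall d1 d2 v, D1 d1 -> D2 d2 -> add d1 d2 = Some v -> le v w) -> le U w.
Proof.
  intros Dir1 Lub1 Dir2 Lub2 HU Hw.
  assert (Def2 : forall d2, D2 d2 -> add U1 d2 <> None).
  { intros d2 Hd2.
    destruct (add_defined_le (le_refl U1) (proj1 Lub2 d2 Hd2) HU) as (s & -> & _).
    discriminate. }
  destruct (add_cont A U1 Dir2 Lub2 Def2) as (t & Ht & _ & Least).
  rewrite HU in Ht; injection Ht as <-.
  apply Least. intros v (d2 & Hd2 & Ev).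
  assert (Def1 : forall d1, D1 d1 -> add d2 d1 <> None).
  { intros d1 Hd1. rewrite add_comm.
    destruct (add_defined_le (proj1 Lub1 d1 Hd1) (proj1 Lub2 d2 Hd2) HU) as (s & -> & _).
    discriminate. }
  destruct (add_cont A d2 Dir1 Lub1 Def1) as (t & Ht & _ & Least').
  rewrite add_comm, Ev in Ht; injection Ht as <-.
  apply Least'. intros v' (d1 & Hd1 & Ev').
  apply (Hw d1 d2); auto. rewrite add_comm; auto.
Qed.

Lemma fin_sum_incl_le I (g : I -> A) l' l v : NoDup l' -> incl l' l -> NoDup l ->
  fs (map g l) = Some v -> exists v', fs (map g l') = Some v' /\ le v' v.
Proof.
  intros Hn Hi Hl H. destruct (NoDup_incl_Permutation Hn Hi Hl) as [r Hr].
  rewrite (fin_sum_Permutation (Permutation_map g Hr)), map_app in H.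
  destruct (fin_sum_app_Some H) as (a & b & Ha & Hb & Hab).
  exists a; split; auto. exists b; auto.
Qed.

Lemma not_supp_zero I (g : I -> A) x : ~ supp A g x -> g x = zero.
Proof. intros H. apply NNPP. exact H. Qed.

Lemma fin_sum_filter_supp I (g : I -> A) l :
  fs (map g l) = fs (map g (filter (fun x => asbool (supp A g x)) l)).
Proof.
  induction l as [|x l IH]; auto.
  cbn [map filter]. destruct (asbool (supp A g x)) eqn:E.
  - cbn [map]. rewrite !fin_sum_cons, IH. reflexivity.
  - assert (Hx : ~ supp A g x) by (intros h; rewrite (proj2 (asboolE _) h) in E; discriminate).
    rewrite fin_sum_cons, (not_supp_zero Hx), <- IH. destruct (fs _); auto. apply add_zero_l.
Qed.

Lemma partial_sum_filter_supp I (g : I -> A) l v : NoDup l ->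
  fs (map g l) = Some v -> partial_sum A (supp A g) g v.
Proof.
  intros Hl E. exists (filter (fun x => asbool (supp A g x)) l).
  rewrite <- fin_sum_filter_supp. repeat split; auto.
  - apply NoDup_filter; auto.
  - intros x Hx. apply filter_In in Hx. apply asboolE. tauto.
Qed.

Lemma is_sum_fin_sum_le I (g : I -> A) U l : is_sum A (supp A g) g U -> NoDup l ->
  exists p, fs (map g l) = Some p /\ le p U.
Proof.
  intros [Hdef [Hub _]] Hl. rewrite fin_sum_filter_supp.
  assert (Hf : NoDup (filter (fun x => asbool (supp A g x)) l)) by (apply NoDup_filter; auto).
  assert (Hs : forall x, In x (filter (fun x => asbool (supp A g x)) l) -> supp A g x).
  { intros x Hx. apply filter_In in Hx. apply asboolE. tauto. }
  destruct (fs _) as [p|] eqn:E; [|exfalso; exact (Hdef _ Hf Hs E)].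
  exists p; split; auto. apply Hub. exists (filter (fun x => asbool (supp A g x)) l); auto.
Qed.

Lemma le_is_sum I (g : I -> A) U x : is_sum A (supp A g) g U -> le (g x) U.
Proof.
  intros H. destruct (is_sum_fin_sum_le H (NoDup_cons x (@in_nil _ x) (NoDup_nil _)))
    as (p & Ep & Lp).
  simpl in Ep. rewrite add_zero in Ep. injection Ep as ->. exact Lp.
Qed.

Lemma partial_sum_directed I (S : I -> Prop) g U : is_sum A S g U ->
  directed le (partial_sum A S g).
Proof.
  intros [Hdef _]. split.
  - exists zero, []. repeat split; [constructor | intros x []].
  - intros a b (l1 & Hn1 & Hs1 & E1) (l2 & Hn2 & Hs2 & E2).
    destruct (NoDup_union Hn1 Hn2) as (l & Hn & Hi1 & Hi2 & Hu).
    assert (HS : forall x, In x l -> S x) by (intros x Hx; destruct (Hu x Hx); auto).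
    destruct (fs (map g l)) as [c|] eqn:E; [|exfalso; exact (Hdef l Hn HS E)].
    exists c. split; [exists l; auto|].
    destruct (fin_sum_incl_le Hn1 Hi1 Hn E) as (v1 & Ev1 & Hv1).
    destruct (fin_sum_incl_le Hn2 Hi2 Hn E) as (v2 & Ev2 & Hv2).
    split; congruence.
Qed.

Lemma is_sum_single I (S : I -> Prop) g x0 :
  (forall x, S x -> x = x0) -> (~ S x0 -> g x0 = zero) -> is_sum A S g (g x0).
Proof.
  intros Hs Hz.
  assert (Hl : forall l, NoDup l -> (forall x, In x l -> S x) -> l = [] \/ l = [x0] /\ S x0).
  { intros [|x [|y l]] Hn Hi; auto.
    - right. assert (Hx : S x) by (apply Hi; left; auto). rewrite <- (Hs x Hx). auto.
    - exfalso. inversion Hn as [|? ? Hnin]; subst. apply Hnin.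
      rewrite (Hs x), (Hs y); [left; auto | |]; apply Hi; simpl; auto. }
  split; [|split].
  - intros l Hn Hi. destruct (Hl l Hn Hi) as [->|[-> _]]; [discriminate|].
    cbn [map]. rewrite fin_sum_single; discriminate.
  - intros d (l & Hn & Hi & E). destruct (Hl l Hn Hi) as [->|[-> _]].
    + injection E as <-. apply zero_le.
    + cbn [map] in E. rewrite fin_sum_single in E. injection E as <-. apply le_refl.
  - intros w Hw. destruct (classic (S x0)) as [H|H].
    + apply Hw. exists [x0]. repeat split.
      * repeat constructor; auto.
      * intros x [<-|[]]; auto.
      * apply fin_sum_single.
    + rewrite Hz; auto. apply zero_le.
Qed.

Lemma sum_val_is_sum Sigma (S : Sigma -> Prop) g u : is_sum A S g u -> sum_val A S g = Some u.
Proof.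
  intros H. unfold sum_val. destruct excluded_middle_informative as [e|n]; [|exfalso; eauto].
  f_equal. destruct (constructive_indefinite_description _ e) as [v Hv]; simpl.
  exact (lub_unique (proj2 Hv) (proj2 H)).
Qed.

Lemma is_sum_mul_l I (g : I -> A) U c : is_sum A (supp A g) g U ->
  is_sum A (supp A (fun t => mul c (g t))) (fun t => mul c (g t)) (mul c U).
Proof.
  intros H.
  assert (Hmul : forall l p, fs (map g l) = Some p ->
    fs (map (fun t => mul c (g t)) l) = Some (mul c p)).
  { intros l p Hp. rewrite <- map_map. apply fin_sum_mul_l; auto. }
  split; [|split].
  - intros l Hn _. destruct (is_sum_fin_sum_le H Hn) as (p & Ep & _).
    rewrite (Hmul l p Ep); discriminate.
  - intros d (l & Hn & _ & E). destruct (is_sum_fin_sum_le H Hn) as (p & Ep & Lp).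
    rewrite (Hmul l p Ep) in E. injection E as <-. apply mul_le_l; auto.
  - intros w Hw. apply (mul_cont_l A c (partial_sum_directed H) (proj2 H)).
    intros v (d & (l & Hn & _ & E) & ->).
    apply Hw. apply (partial_sum_filter_supp Hn). apply Hmul; auto.
Qed.

Lemma countable_supp_mul_l I (g : I -> A) c :
  countable (supp A g) -> countable (supp A (fun t => mul c (g t))).
Proof.
  apply countable_subset. intros x Hx Hz. apply Hx. rewrite Hz. apply mul_zero_r.
Qed.

Definition add_fun I (m1 m2 : I -> A) : I -> A :=
  fun t => match add (m1 t) (m2 t) with Some v => v | None => zero end.

Lemma fin_sum_add_fun I (m1 m2 : I -> A) l p1 p2 p :
  fs (map m1 l) = Some p1 -> fs (map m2 l) = Some p2 -> add p1 p2 = Some p ->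
  fs (map (add_fun m1 m2) l) = Some p.
Proof.
  revert p1 p2 p; induction l as [|x l IH]; intros p1 p2 p E1 E2 E.
  - injection E1 as <-. injection E2 as <-. rewrite add_zero_l in E. auto.
  - simpl map in *. rewrite fin_sum_cons in *.
    destruct (fs (map m1 l)) as [q1|]; [|discriminate].
    destruct (fs (map m2 l)) as [q2|]; [|discriminate].
    destruct (add_interchange E1 E2 E) as (u & v & Hu & Hv & Huv).
    rewrite (IH q1 q2 v eq_refl eq_refl Hv). unfold add_fun at 1. rewrite Hu. auto.
Qed.

Lemma countable_supp_add_fun I (m1 m2 : I -> A) :
  countable (supp A m1) -> countable (supp A m2) -> countable (supp A (add_fun m1 m2)).
Proof.
  intros C1 C2. apply (countable_union C1 C2).
  intros x Hx. destruct (classic (supp A m1 x)) as [h|h]; auto.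
  destruct (classic (supp A m2 x)) as [h'|h']; auto.
  exfalso. apply Hx. unfold add_fun. rewrite (not_supp_zero h), (not_supp_zero h'), add_zero. auto.
Qed.

Section AddFun.
Variable I : Type.
Variables m1 m2 : I -> A.
Variables U1 U2 U : A.
Hypothesis H1 : is_sum A (supp A m1) m1 U1.
Hypothesis H2 : is_sum A (supp A m2) m2 U2.
Hypothesis HU : add U1 U2 = Some U.

Lemma fin_sum_add_fun_le l : NoDup l -> exists q1 q2 p,
  fs (map m1 l) = Some q1 /\ fs (map m2 l) = Some q2 /\ add q1 q2 = Some p /\
  fs (map (add_fun m1 m2) l) = Some p /\ le p U.
Proof.
  intros Hn. destruct (is_sum_fin_sum_le H1 Hn) as (q1 & E1 & L1).
  destruct (is_sum_fin_sum_le H2 Hn) as (q2 & E2 & L2).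
  destruct (add_defined_le L1 L2 HU) as (p & Hp & Lp).
  exists q1, q2, p. repeat split; auto. exact (fin_sum_add_fun E1 E2 Hp).
Qed.

Lemma is_sum_add_fun : is_sum A (supp A (add_fun m1 m2)) (add_fun m1 m2) U.
Proof.
  split; [|split].
  - intros l Hn _. destruct (fin_sum_add_fun_le Hn) as (_ & _ & p & _ & _ & _ & -> & _).
    discriminate.
  - intros d (l & Hn & _ & E). destruct (fin_sum_add_fun_le Hn) as (_ & _ & p & _ & _ & _ & E' & L).
    rewrite E in E'. injection E' as ->. exact L.
  - intros w Hw.
    apply (add_lub_least (partial_sum_directed H1) (proj2 H1)
                         (partial_sum_directed H2) (proj2 H2) HU).
    intros d1 d2 v (l1 & Hn1 & _ & E1) (l2 & Hn2 & _ & E2) Ev.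
    destruct (NoDup_union Hn1 Hn2) as (l & Hn & Hi1 & Hi2 & _).
    destruct (fin_sum_add_fun_le Hn) as (q1 & q2 & p & F1 & F2 & Fp & Fr & _).
    destruct (fin_sum_incl_le Hn1 Hi1 Hn F1) as (v1 & G1 & L1).
    destruct (fin_sum_incl_le Hn2 Hi2 Hn F2) as (v2 & G2 & L2).
    rewrite E1 in G1; injection G1 as <-. rewrite E2 in G2; injection G2 as <-.
    destruct (add_defined_le L1 L2 Fp) as (s & Hs & Ls).
    rewrite Ev in Hs; injection Hs as <-.
    apply (le_trans Ls). apply Hw. exact (partial_sum_filter_supp Hn Fr).
Qed.

End AddFun.

Lemma add_mul_defined c1 c2 : add c1 c2 <> None ->
  forall x y, add (mul c1 x) (mul c2 y) <> None.
Proof.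
  intros Hc x y. destruct (add c1 c2) as [c|] eqn:Ec; [|congruence].
  destruct (has_top A) as [T HT].
  assert (HcT : add (mul c1 T) (mul c2 T) = Some (mul c T)) by (apply mul_add_r; auto).
  destruct (add_defined_le (mul_le_l c1 (HT x)) (mul_le_l c2 (HT y)) HcT) as (s & -> & _).
  discriminate.
Qed.

End PartialSemiring.

Section Semantics.
Variable A : PSR.
Variable Sigma : Type.

Lemma is_weighting_mul_l (m : Sigma -> A) c :
  is_weighting A m -> is_weighting A (fun t => mul A c (m t)).
Proof.
  intros [Cm [U HU]]. split.
  - apply countable_supp_mul_l; auto.
  - exists (mul A c U). apply is_sum_mul_l; auto.
Qed.

Lemma wplus_defined (m1 m2 : Sigma -> A) U1 U2 :
  countable (supp A m1) -> countable (supp A m2) ->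
  is_sum A (supp A m1) m1 U1 -> is_sum A (supp A m2) m2 U2 -> add A U1 U2 <> None ->
  wplus A m1 m2 <> None.
Proof.
  intros C1 C2 H1 H2 HU. destruct (add A U1 U2) as [U|] eqn:EU; [|congruence].
  unfold wplus. rewrite guard_Some; [discriminate|]. split; [|split].
  - intros t. destruct (add_defined_le (le_is_sum t H1) (le_is_sum t H2) EU) as (s & -> & _).
    discriminate.
  - exact (countable_supp_add_fun C1 C2).
  - exists U. exact (is_sum_add_fun H1 H2 EU).
Qed.

Lemma supp_mul_eta (c : A) (s x : Sigma) : supp A (fun t => mul A c (eta A s t)) x -> x = s.
Proof.
  intros Hx. apply NNPP. intros Hne. apply Hx.
  unfold eta. destruct excluded_middle_informative; [congruence|]. apply mul_zero_r.
Qed.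

Lemma mul_eta_self (c : A) (s : Sigma) : mul A c (eta A s s) = c.
Proof. unfold eta. destruct excluded_middle_informative; [|congruence]. apply mul_one_r. Qed.

Lemma sem_assume_eq (e : expr A Sigma) s :
  sem_assume e s = Some (fun t => mul A (eval e s) (eta A s t)).
Proof.
  apply guard_Some. split.
  - exists (fun _ => 0). intros x y Hx Hy _.
    rewrite (supp_mul_eta Hx), (supp_mul_eta Hy). reflexivity.
  - eexists. apply is_sum_single; [apply supp_mul_eta | intros Hs; exact (not_supp_zero Hs)].
Qed.

Lemma bind_concentrated (f : den A Sigma) (m : Sigma -> A) s a :
  f s = Some a -> is_weighting A a -> (forall x, supp A m x -> x = s) ->
  bind f m = Some (fun t => mul A (m s) (a t)).
Proof.
  intros Ea Wa Hm.
  assert (HS : forall t, is_sum A (supp A m)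
    (fun x => mul A (m x) (match f x with Some m' => m' t | None => zero A end))
    (mul A (m s) (a t))).
  { intros t.
    assert (Eat : a t = match f s with Some m' => m' t | None => zero A end)
      by (rewrite Ea; reflexivity).
    rewrite Eat.
    apply (is_sum_single
      (g := fun x => mul A (m x) (match f x with Some m' => m' t | None => zero A end))); auto.
    intros Hs. rewrite (not_supp_zero Hs). apply mul_zero_l. }
  unfold bind; cbv zeta.
  match goal with |- guard _ ?r = _ =>
    replace r with (fun t => mul A (m s) (a t)) end.
  2:{ apply functional_extensionality; intros t. rewrite (sum_val_is_sum (HS t)). reflexivity. }
  apply guard_Some. split; [|split].
  - intros x Hx. rewrite (Hm x Hx), Ea. discriminate.
  - intros t. eexists. apply HS.
  - apply is_weighting_mul_l; auto.
Qed.

Lemma sem_seq_assume (e : expr A Sigma) (C : den A Sigma) s a :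
  C s = Some a -> is_weighting A a ->
  sem_seq (sem_assume e) C s = Some (fun t => mul A (eval e s) (a t)).
Proof.
  intros Ea Wa. unfold sem_seq. rewrite sem_assume_eq.
  rewrite (bind_concentrated Ea Wa (@supp_mul_eta _ s)), mul_eta_self. reflexivity.
Qed.

End Semantics.

Theorem lemmaA8 (A : PSR) (Sigma : Type) (e1 e2 : expr A Sigma)
  (C1 C2 : den A Sigma) :
  wf_den C1 -> wf_den C2 ->
  compatible e1 e2 ->
  total C1 -> total C2 ->
  total (sem_plus (sem_seq (sem_assume e1) C1) (sem_seq (sem_assume e2) C2)).
Proof.
  intros W1 W2 Hc T1 T2 s.
  destruct (C1 s) as [a|] eqn:Ea; [|exfalso; exact (T1 s Ea)].
  destruct (C2 s) as [b|] eqn:Eb; [|exfalso; exact (T2 s Eb)].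
  pose proof (W1 s a Ea) as Wa. pose proof (W2 s b Eb) as Wb.
  unfold sem_plus. rewrite (sem_seq_assume e1 Ea Wa), (sem_seq_assume e2 Eb Wb).
  destruct Wa as [Ca [Ua HUa]], Wb as [Cb [Ub HUb]].
  apply wplus_defined with (U1 := mul A (eval e1 s) Ua) (U2 := mul A (eval e2 s) Ub).
  - apply countable_supp_mul_l; auto.
  - apply countable_supp_mul_l; auto.
  - apply is_sum_mul_l; auto.
  - apply is_sum_mul_l; auto.
  - apply add_mul_defined. exact (Hc s).
Qed.
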